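(* Let $s_1<\dots<s_n$ be reals and $Z(n,d)\subseteq\mathbb{R}^d$ the cyclic zonotope they define. The poset of proper faces of $Z(n,d)$, ordered by inclusion, is isomorphic to the induced subposet of $\Lambda_n$ consisting of those $\lambda$ with $m(\lambda)\le d-1$.
   Context: $Z(n,d)=\{\sum_{i=1}^n c_iu_i:0\le c_i\le1\}$ with $u_i=(1,s_i,\dots,s_i^{d-1})$. Proper faces are the nonempty faces different from $Z(n,d)$. $\Lambda_n=\{0,+,-\}^n$, partially ordered componentwise by the order on $\{0,+,-\}$ with relations $+<0$ and $-<0$ (and $+,-$ incomparable). For $\lambda=(\lambda_1,\dots,\lambda_n)\in\Lambda_n$: an even gap is a pair of indices $i<j$ with $\lambda_i,\lambda_j$ nonzero of opposite signs, $\lambda_r=0$ for all $i<r<j$, and $j-i-1$ even (possibly zero); an odd gap is a pair $i<j$ with $\lambda_i,\lambda_j$ nonzero of the same sign, $\lambda_r=0$ for all $i<r<j$, and $j-i-1$ odd. $m(\lambda)$ is the number of even gaps plus the number of odd gaps plus the number of zero entries of $\lambda$. *)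

From HB Require Import structures.
From mathcomp Require Import all_boot all_order all_algebra.
Set Implicit Arguments. Unset Strict Implicit. Unset Printing Implicit Defensive.
Import Order.TTheory GRing.Theory Num.Theory.
Local Open Scope ring_scope.

Inductive sign := Zero | Plus | Minus.

Definition sign_eqb (a b : sign) : bool :=
  match a, b with
  | Zero, Zero | Plus, Plus | Minus, Minus => true
  | _, _ => false
  end.

Lemma sign_eqP : Equality.axiom sign_eqb.
Proof. by case; case; constructor. Qed.

HB.instance Definition _ := hasDecEq.Build sign sign_eqP.

Definition sign_le (a b : sign) : bool := (a == b) || (b == Zero).

Definition lam_le (n : nat) (l1 l2 : 'I_n -> sign) : Prop :=
  forall i, sign_le (l1 i) (l2 i).

Definition zeros_between (n : nat) (l : 'I_n -> sign) (i j : 'I_n) : bool :=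
  [forall r : 'I_n, ((i < r)%N && (r < j)%N) ==> (l r == Zero)].

Definition even_gap (n : nat) (l : 'I_n -> sign) (i j : 'I_n) : bool :=
  [&& (i < j)%N,
      ((l i == Plus) && (l j == Minus)) || ((l i == Minus) && (l j == Plus)),
      zeros_between l i j & ~~ odd (j - i - 1)].

Definition odd_gap (n : nat) (l : 'I_n -> sign) (i j : 'I_n) : bool :=
  [&& (i < j)%N, l i != Zero, l i == l j,
      zeros_between l i j & odd (j - i - 1)].

Definition mlam (n : nat) (l : 'I_n -> sign) : nat :=
  (#|[pred p : 'I_n * 'I_n | even_gap l p.1 p.2]|
   + #|[pred p : 'I_n * 'I_n | odd_gap l p.1 p.2]|
   + #|[pred i : 'I_n | l i == Zero]|)%N.

Definition ugen (R : ringType) (n d : nat) (s : 'I_n -> R) (i : 'I_n) : 'rV[R]_d :=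
  \row_(k < d) s i ^+ k.

Definition zonotope (R : numDomainType) (n d : nat) (s : 'I_n -> R)
  (x : 'rV[R]_d) : Prop :=
  exists c : 'I_n -> R, (forall i, 0 <= c i <= 1) /\
    x = \sum_(i < n) c i *: ugen d s i.

Definition dotv (R : ringType) (d : nat) (w x : 'rV[R]_d) : R :=
  \sum_(k < d) w 0 k * x 0 k.

(* A (nonempty) face of a polytope P: the set of maximizers on P of some
   linear functional w (w = 0 gives P itself). *)
Definition is_face (R : numDomainType) (d : nat) (P F : 'rV[R]_d -> Prop) : Prop :=
  exists w : 'rV[R]_d, forall x,
    F x <-> (P x /\ forall y, P y -> dotv w y <= dotv w x).

Definition proper_face (R : numDomainType) (d : nat) (P F : 'rV[R]_d -> Prop) : Prop :=
  [/\ is_face P F, exists x, F x & ~ (forall x, P x -> F x)].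

From HB Require Import structures.
From mathcomp Require Import all_boot all_order all_algebra.
From mathcomp Require Import ring lra zify.
Import Order.TTheory GRing.Theory Num.Theory.
Local Open Scope ring_scope.

(* A functional w restricts to the generators as a polynomial: <w, u_i> = p(s_i)
   with size p <= d. The face of Z(n,d) maximizing w consists of the points
   sum c_i u_i with c_i = 1 where p(s_i) > 0, c_i = 0 where p(s_i) < 0 and c_i
   free where p(s_i) = 0. So proper faces correspond to the sign vectors of
   nonzero polynomials of size at most d along s, and inclusion of faces to the
   order of Lambda_n, since the face of lambda contains a point whose
   coefficients recover lambda.
   Such a sign vector lambda is realizable iff m(lambda) < d. Divide out
   zero_poly = prod_(lambda_z = 0) (X - s_z): the cofactor must have the sign of
   rho_i = lambda_i * zero_poly(s_i) at every nonzero entry, and the gaps of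
   lambda are exactly the sign changes of rho between consecutive nonzero
   entries. A polynomial changing sign k times along increasing points has size
   > k (proved without the intermediate value theorem, by repeatedly dividing
   out a root created by interpolation), whence m(lambda) < size p. Conversely,
   zero_poly times a polynomial with one root in each interval where rho changes
   sign realizes lambda with size m(lambda) + 1. *)

Set Implicit Arguments. Unset Strict Implicit.

Section SignProducts.
Variable R : realDomainType.

Lemma sqr_gt0 (x : R) : x != 0 -> 0 < x * x.
Proof. by move=> x0; rewrite -expr2 exprn_even_gt0 ?x0 ?orbT. Qed.

Lemma prod_sign_gt0 (I : Type) (r : seq I) (F : I -> R) :
  all (fun i => F i != 0) r ->
  0 < (-1) ^+ count (fun i => F i < 0) r * \prod_(i <- r) F i.
Proof.
elim: r => [|x r IH] /=; first by rewrite big_nil mulr1 ltr01.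
case/andP => Fx0 /IH; rewrite big_cons exprD.
set b := nat_of_bool _; set c := count _ r; set P := \prod_(i <- r) F i => hr.
have -> : (-1) ^+ b * (-1) ^+ c * (F x * P) = ((-1) ^+ b * F x) * ((-1) ^+ c * P) by ring.
apply: mulr_gt0 hr; rewrite /b; case: (ltP (F x) 0) => /= Fx.
  by rewrite mulN1r oppr_gt0.
by rewrite mul1r lt_def Fx0.
Qed.

Definition sign_changes (v : nat -> R) (N : nat) : nat :=
  count (fun j => v j * v j.+1 < 0) (iota 0 N).

Lemma sign_changes_parity (v : nat -> R) (N : nat) :
  (forall j, (j <= N)%N -> v j != 0) ->
  0 < (-1) ^+ sign_changes v N * (v 0%N * v N).
Proof.
elim: N => [|N IH] v0; first by rewrite mul1r sqr_gt0 ?v0.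
have vN := v0 N (leqnSn N); have hc := IH (fun j hj => v0 j (leqW hj)).
have hN : 0 < (-1) ^+ nat_of_bool (v N * v N.+1 < 0) * (v N * v N.+1).
  case: (ltP (v N * v N.+1) 0) => /= h; first by rewrite mulN1r oppr_gt0.
  by rewrite mul1r lt_def mulf_neq0 ?vN ?v0.
rewrite /sign_changes -addn1 iotaD count_cat /= add0n addn0 addn1 exprD.
rewrite -(pmulr_rgt0 _ (sqr_gt0 vN)).
by have := mulr_gt0 hc hN; congr (0 < _); rewrite /sign_changes; ring.
Qed.

Lemma mul_lt0_congr (a x b y : R) :
  0 < a * x -> 0 < b * y -> (x * y < 0) = (a * b < 0).
Proof.
move=> ax by_; have h : 0 < (a * b) * (x * y).
  by have := mulr_gt0 ax by_; congr (0 < _); ring.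
case: (ltP (x * y) 0) => xy; first by rewrite (nmulr_lgt0 _ xy) in h.
have xy0 : 0 < x * y by rewrite lt_def xy andbT; apply: contraTneq h => ->; rewrite mulr0 ltxx.
by rewrite (pmulr_lgt0 _ xy0) in h; rewrite ltNge ltW.
Qed.

Lemma mul_subr_lt0 (a b x : R) : a < b -> ((a - x) * (b - x) < 0) = (a < x < b).
Proof.
move=> ab; case: (ltP a x) => ax; case: (ltP x b) => xb /=.
- by apply/idP; nra.
- by apply/negbTE; rewrite -leNgt; nra.
- by apply/negbTE; rewrite -leNgt; nra.
- by apply/negbTE; rewrite -leNgt; nra.
Qed.

End SignProducts.

Lemma homo_lt_upto (T : Type) (r : T -> T -> Prop) (f : nat -> T) (N : nat) :
  (forall y x z, r x y -> r y z -> r x z) ->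
  (forall j, (j < N)%N -> r (f j) (f j.+1)) ->
  forall i j, (i < j)%N -> (j <= N)%N -> r (f i) (f j).
Proof.
move=> r_trans fS i j ij jN.
apply: (@homo_ltn_in _ [pred k | (k <= N)%N] f r) => //.
- by move=> a b _ bN c /andP[_ cb]; rewrite inE (leq_trans (ltnW cb)).
- by move=> k _ /=; exact: fS.
- exact: ltnW (leq_trans ij jN).
Qed.

Section PolySignChanges.
Variable R : realFieldType.
Implicit Types (q h r : {poly R}) (t : nat -> R).

Definition alternates q t (N : nat) : Prop :=
  forall j, (j < N)%N -> q.[t j] * q.[t j.+1] < 0.

Lemma alternates_divXsubC N t (T : R) r :
  (forall j, (j <= N)%N -> t j < T) ->
  alternates (r * ('X - T%:P)) t N -> alternates r t N.
Proof.
move=> tT hr j jN; have := hr j jN; rewrite !hornerM !hornerXsubC.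
have pos : 0 < (t j - T) * (t j.+1 - T).
  by rewrite nmulr_rgt0 subr_lt0 tT // ltnW.
have -> : r.[t j] * (t j - T) * (r.[t j.+1] * (t j.+1 - T)) =
          r.[t j] * r.[t j.+1] * ((t j - T) * (t j.+1 - T)) by ring.
by rewrite pmulr_llt0.
Qed.

Lemma alternates_ends_sign N t q :
  alternates q t N -> q.[t N] != 0 -> 0 < (-1) ^+ N * (q.[t 0%N] * q.[t N]).
Proof.
move=> hq qN; have := @sign_changes_parity _ (fun j => q.[t j]) N.
rewrite /sign_changes (eq_in_count (a2 := predT)) ?count_predT ?size_iota => [|j]; last first.
  by rewrite mem_iota => /andP[_ jN]; apply: hq.
apply=> j; rewrite leq_eqVlt => /orP[/eqP -> // | jN].
by apply: contraTneq (hq j jN) => ->; rewrite mul0r ltxx.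
Qed.

Lemma prod_sub_first_sign N t :
  (forall j, (j < N)%N -> t j < t j.+1) ->
  0 < (-1) ^+ N * \prod_(1 <= l < N.+1) (t 0%N - t l).
Proof.
move=> ht; have tlt := homo_lt_upto lt_trans ht.
have := @prod_sign_gt0 _ _ (index_iota 1 N.+1) (fun l => t 0%N - t l).
rewrite (eq_in_count (a2 := predT)) ?count_predT ?size_iota ?subn1 => [|l].
  apply; apply/allP => l; rewrite mem_index_iota => /andP[l0 lN].
  by rewrite ltr0_neq0 // subr_lt0 tlt.
by rewrite mem_index_iota => /andP[l0 lN]; rewrite subr_lt0 tlt.
Qed.

(* Subtracting a multiple of [g = prod_(0 < l <= N) ('X - t l)] keeps the
   values at the inner points, kills the last one and still flips the sign
   between the first two points. *)
Lemma alternates_vanish_last N t q :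
  (forall j, (j < N.+1)%N -> t j < t j.+1) -> alternates q t N.+1 ->
  exists h, [/\ (size h <= maxn (size q) N.+1)%N, h.[t N.+1] = 0,
               h.[t 0%N] != 0 & alternates h t N].
Proof.
move=> ht hq; have tlt := homo_lt_upto lt_trans ht.
set T := t N.+1; pose g := \prod_(1 <= l < N.+1) ('X - (t l)%:P).
have hg x : g.[x] = \prod_(1 <= l < N.+1) (x - t l).
  by rewrite horner_prod; apply: eq_bigr => l _; rewrite hornerXsubC.
have gT : 0 < g.[T].
  rewrite hg big_seq; apply: prodr_gt0 => l; rewrite mem_index_iota => /andP[_ lN].
  by rewrite subr_gt0 tlt.
have g_inner j : (0 < j <= N)%N -> g.[t j] = 0.
  move=> /andP[j0 jN]; apply/eqP; rewrite hg prodf_seq_eq0; apply/hasP; exists j.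
    by rewrite mem_index_iota j0 ltnS.
  by rewrite subrr eqxx.
have g_t0 : 0 < q.[t 1%N] * q.[T] * g.[t 0%N].
  have qT : q.[T] != 0 by apply: contraTneq (hq N (ltnSn N)) => ->; rewrite mulr0 ltxx.
  have := mulr_gt0 (alternates_ends_sign (t := fun j => t j.+1) (fun j => hq j.+1) qT)
                   (prod_sub_first_sign (fun j jN => ht j (leqW jN))).
  by rewrite -hg; congr (0 < _); rewrite -[RHS](signrMK N); ring.
pose h := q - (q.[T] / g.[T]) *: g.
have hh x : h.[x] = q.[x] - q.[T] / g.[T] * g.[x] by rewrite /h hornerD hornerN hornerZ.
have h_inner j : (0 < j <= N)%N -> h.[t j] = q.[t j].
  by move=> jN; rewrite hh g_inner // mulr0 subr0.
have h0 : h.[t 0%N] * q.[t 1%N] < 0.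
  have q01 := hq 0%N isT; have := divr_gt0 g_t0 gT; rewrite hh mulrBl.
  have -> : q.[T] / g.[T] * g.[t 0%N] * q.[t 1%N] = q.[t 1%N] * q.[T] * g.[t 0%N] / g.[T].
    by ring.
  lra.
exists h; split.
- rewrite (leq_trans (size_polyD _ _)) // size_polyN geq_max leq_maxl /=.
  rewrite (leq_trans (size_scale_leq _ _)) // size_prod_XsubC size_iota subn1.
  exact: leq_maxr.
- by rewrite hh divfK ?subrr // gt_eqF.
- by apply: contraTneq h0 => ->; rewrite mul0r ltxx.
- case=> [|j] jN; first by rewrite (h_inner 1%N) ?jN.
  by rewrite !h_inner ?jN ?(ltnW jN) //; apply: hq; rewrite ltnS ltnW.
Qed.

Lemma alternates_size N t q :
  (forall j, (j < N)%N -> t j < t j.+1) -> alternates q t N -> q.[t 0%N] != 0 ->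
  (N < size q)%N.
Proof.
elim: N q => [|N IH] q ht hq q0.
  by rewrite size_poly_gt0; apply: contraNneq q0 => ->; rewrite horner0.
rewrite ltnNge; apply/negP => szq.
have [h [szh hT h0 halt]] := alternates_vanish_last ht hq.
have /factor_theorem [r hr] : root h (t N.+1) by apply/eqP.
have r0 : r.[t 0%N] != 0 by apply: contraNneq h0; rewrite hr hornerM => ->; rewrite mul0r.
have r_nz : r != 0 by apply: contraNneq r0 => ->; rewrite horner0.
have : (N < size r)%N.
  apply: IH r0; first by move=> j jN; rewrite ht // ltnW.
  apply: (@alternates_divXsubC _ _ (t N.+1)); last by rewrite -hr.
  by move=> j jN; apply: (homo_lt_upto lt_trans ht); rewrite ?ltnS.
rewrite hr size_mul ?polyXsubC_eq0 // size_XsubC addn2 /= in szh.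
by move: szh; rewrite (maxn_idPr szq) ltnS => szr; rewrite ltnNge szr.
Qed.

Lemma sign_changes_subseq (v : nat -> R) N :
  (forall j, (j <= N)%N -> v j != 0) ->
  exists2 phi : nat -> nat, phi (sign_changes v N) = N &
    forall k, (k < sign_changes v N)%N ->
      (phi k < phi k.+1)%N /\ v (phi k) * v (phi k.+1) < 0.
Proof.
elim: N => [|N IH] v0; first by exists (fun _ => 0%N).
have [phi phiC hphi] := IH (fun j jN => v0 j (leqW jN)).
have vN := v0 N (leqnSn N); have vN1 := v0 N.+1 (leqnn _).
set C := sign_changes v N in phiC hphi.
have -> : sign_changes v N.+1 = (C + nat_of_bool (v N * v N.+1 < 0)%R)%N.
  by rewrite /sign_changes -addn1 iotaD count_cat /= add0n addn0 addn1.
set C' := (C + _)%N.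
exists (fun k => if k == C' then N.+1 else phi k) => [|k kC']; first by rewrite eqxx.
rewrite (ltn_eqF kC'); case: (ltnP k.+1 C') => kC.
  by rewrite (ltn_eqF kC); apply: hphi; move: kC; rewrite /C'; case: (_ < 0); lia.
have e : k.+1 = C' by apply/eqP; rewrite eqn_leq kC kC'.
rewrite e eqxx; move: e; rewrite /C'; case: ltP => [vNN1 | vNN1] /=.
  by rewrite addn1 => -[->]; rewrite phiC.
rewrite addn0 => e; have [phik vk] : _ /\ _ := hphi k (eq_leq e).
rewrite e phiC in phik vk; split; first exact: leqW.
have vNN1' : 0 < v N * v N.+1 by rewrite lt_def mulf_neq0.
rewrite (mul_lt0_congr (sqr_gt0 _) vNN1') //.
by apply: contraTneq vk => ->; rewrite mul0r ltxx.
Qed.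

Lemma sign_changes_lt_size N t q :
  (forall j, (j < N)%N -> t j < t j.+1) -> (forall j, (j <= N)%N -> q.[t j] != 0) ->
  (sign_changes (fun j => q.[t j]) N < size q)%N.
Proof.
move=> ht q0; have [phi phiC hphi] := sign_changes_subseq q0.
set C := sign_changes _ N in phiC hphi.
have phi_le k : (k <= C)%N -> (phi k <= N)%N.
  rewrite -phiC leq_eqVlt => /orP[/eqP -> // | kC]; apply: ltnW.
  by apply: (@homo_lt_upto _ _ phi C ltn_trans) => // j jC; case: (hphi j jC).
apply: (alternates_size (t := fun k => t (phi k))).
- by move=> k kC; apply: (homo_lt_upto lt_trans ht); [case: (hphi k kC) | exact: phi_le].
- by move=> k kC; case: (hphi k kC).
- exact/q0/phi_le.
Qed.

End PolySignChanges.

Section Signs.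
Variable R : realDomainType.
Implicit Types x : R.

Definition sign_of x : sign := if 0 < x then Plus else if x < 0 then Minus else Zero.

Definition sign_num (a : sign) : R :=
  match a with Plus => 1 | Minus => -1 | Zero => 0 end.

Variant sign_of_spec x : sign -> Type :=
  | SignOfPlus of 0 < x : sign_of_spec x Plus
  | SignOfMinus of x < 0 : sign_of_spec x Minus
  | SignOfZero of x = 0 : sign_of_spec x Zero.

Lemma sign_ofP x : sign_of_spec x (sign_of x).
Proof. by rewrite /sign_of; case: ltgtP => x0; constructor. Qed.

Lemma sign_of_eq0 x : (sign_of x == Zero) = (x == 0).
Proof. by case: sign_ofP => [x0 | x0 | ->]; rewrite ?eqxx // ?(gt_eqF x0) ?(lt_eqF x0). Qed.

Lemma sign_of_gt0 x : x != 0 -> 0 < sign_num (sign_of x) * x.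
Proof. by case: sign_ofP => [x0 | x0 | ->]; rewrite ?eqxx //= ?mul1r ?mulN1r ?oppr_gt0. Qed.

Lemma sign_of_num (a : sign) x : a != Zero -> 0 < sign_num a * x -> sign_of x = a.
Proof.
case: a => //= _; rewrite ?mul1r ?mulN1r ?oppr_gt0 => x0.
all: by case: sign_ofP => // x0'; exfalso; lra.
Qed.


End Signs.

Lemma count_iota_between (a b m : nat) :
  count (fun z => (a < z < b)%N) (iota 0 m) = (minn m b - a.+1)%N.
Proof.
elim: m => [|m IH]; first by rewrite min0n.
rewrite -[m.+1]addn1 iotaD count_cat IH /= add0n addn0.
case: (ltnP a m) => h1; case: (ltnP m b) => h2 /=; lia.
Qed.

Section SupportSignChanges.
Variables (R : realFieldType) (n : nat) (s : 'I_n -> R).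
Hypothesis s_incr : forall i j : 'I_n, (i < j)%N -> s i < s j.
Variables (lam : 'I_n -> sign) (i0 : 'I_n).

Lemma lt_s (i j : 'I_n) : (s i < s j) = (i < j)%N.
Proof.
case: (ltngtP i j) => [ij | ji | /val_inj->]; last by rewrite ltxx.
  by rewrite s_incr.
by apply/negbTE; rewrite -leNgt ltW // s_incr.
Qed.

Lemma s_inj : injective s.
Proof. by move=> i j e; apply: val_inj; case: (ltngtP i j) => // /s_incr; rewrite e ltxx. Qed.

Definition zeros : seq 'I_n := [seq z <- enum 'I_n | lam z == Zero].

Definition zero_poly : {poly R} := \prod_(z <- zeros) ('X - (s z)%:P).

Definition rho (i : 'I_n) : R := sign_num R (lam i) * zero_poly.[s i].

Definition supp : seq 'I_n := [seq i <- enum 'I_n | lam i != Zero].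

Definition supp_at (k : nat) : 'I_n := nth i0 supp k.

Definition supp_pt (k : nat) : R := s (supp_at k).

Definition rho_at (k : nat) : R := rho (supp_at k).

Definition changes : seq nat := [seq k <- iota 0 (size supp).-1 | rho_at k * rho_at k.+1 < 0].

Definition change_poly : {poly R} :=
  \prod_(k <- changes) ('X - ((supp_pt k + supp_pt k.+1) / 2)%:P).

Lemma mem_zeros z : (z \in zeros) = (lam z == Zero).
Proof. by rewrite mem_filter mem_enum andbT. Qed.

Lemma size_zero_poly : size zero_poly = (#|[pred i | lam i == Zero]|).+1.
Proof. by rewrite size_prod_XsubC size_filter enumT cardE size_filter. Qed.

Lemma horner_zero_poly x : zero_poly.[x] = \prod_(z <- zeros) (x - s z).
Proof. by rewrite horner_prod; apply: eq_bigr => z _; rewrite hornerXsubC. Qed.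

Lemma zero_poly_root i : lam i = Zero -> zero_poly.[s i] = 0.
Proof.
move=> li; apply/eqP; rewrite horner_zero_poly prodf_seq_eq0; apply/hasP.
by exists i; rewrite ?mem_zeros ?li ?subrr ?eqxx.
Qed.

Lemma rho_neq0 i : lam i != Zero -> rho i != 0.
Proof.
move=> li; rewrite /rho mulf_neq0 //; first by case: (lam i) li => //= _; rewrite ?oppr_eq0 oner_eq0.
rewrite horner_zero_poly prodf_seq_neq0; apply/allP => z; rewrite mem_zeros => /eqP lz.
by rewrite subr_eq0; apply: contra_neq li => /s_inj ->.
Qed.

Lemma zero_poly_mul_sign (i j : 'I_n) :
  (i < j)%N -> lam i != Zero -> lam j != Zero -> zeros_between lam i j ->
  0 < (-1) ^+ (j - i - 1) * (zero_poly.[s i] * zero_poly.[s j]).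
Proof.
move=> ij li lj zb; rewrite !horner_zero_poly -big_split /=.
have /prod_sign_gt0 : all (fun z => (s i - s z) * (s j - s z) != 0) zeros.
  apply/allP => z; rewrite mem_zeros => /eqP lz; rewrite mulf_neq0 // subr_eq0.
    by apply: contra_neq li => /s_inj ->.
  by apply: contra_neq lj => /s_inj ->.
congr (0 < (-1) ^+ _ * _).
rewrite (eq_count (a2 := fun z : 'I_n => (i < z < j)%N)); last first.
  by move=> z; rewrite /= mul_subr_lt0 ?lt_s.
rewrite count_filter (eq_count (a2 := fun z : 'I_n => (i < z < j)%N)); last first.
  move=> z /=; case: (boolP (i < z < j)%N) => // izj.
  exact: implyP (forallP zb z) izj.
rewrite -(count_map (@nat_of_ord n) (fun z => (i < z < j)%N)) val_enum_ord.
by rewrite count_iota_between (minn_idPr (ltnW (ltn_ord j))) subnS subn1.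
Qed.

Lemma mem_supp i : (i \in supp) = (lam i != Zero).
Proof. by rewrite mem_filter mem_enum andbT. Qed.

Lemma supp_at_ltE k k' : (k < size supp)%N -> (k' < size supp)%N ->
  (supp_at k < supp_at k')%N = (k < k')%N.
Proof.
have ltn_ord_trans : transitive (fun i j : 'I_n => (i < j)%N).
  by move=> a b c; apply: ltn_trans.
have sorted_supp : sorted (fun i j : 'I_n => (i < j)%N) supp.
  apply: sorted_filter => //.
  by have := iota_ltn_sorted 0 n; rewrite -val_enum_ord sorted_map.
have lt_supp k1 k2 : (k1 < k2)%N -> (k2 < size supp)%N -> (supp_at k1 < supp_at k2)%N.
  move=> k12 k2s; apply: (sorted_ltn_nth ltn_ord_trans) => //.
  by rewrite inE (ltn_trans k12 k2s).
move=> ks k's; case: (ltngtP k k') => [kk' | k'k | ->]; first exact: lt_supp.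
  by apply/negbTE; rewrite -leqNgt ltnW // lt_supp.
by rewrite ltnn.
Qed.

Lemma supp_at_neq0 k : (k < size supp)%N -> lam (supp_at k) != Zero.
Proof. by move=> ks; rewrite -mem_supp mem_nth. Qed.

Lemma supp_at_index i : lam i != Zero ->
  supp_at (index i supp) = i /\ (index i supp < size supp)%N.
Proof. by rewrite -mem_supp => i_supp; rewrite /supp_at nth_index // index_mem. Qed.

Lemma zeros_between_supp_at k : (k.+1 < size supp)%N ->
  zeros_between lam (supp_at k) (supp_at k.+1).
Proof.
move=> ks; apply/forallP => r; apply/implyP => /andP[lo hi].
apply/negPn/negP => /supp_at_index[e rs]; rewrite -e in lo hi.
rewrite supp_at_ltE ?(ltnW ks) // in lo; rewrite supp_at_ltE // in hi; lia.
Qed.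

Lemma supp_at_consecutive (i j : 'I_n) :
  (i < j)%N -> lam i != Zero -> lam j != Zero -> zeros_between lam i j ->
  ((index i supp).+1 < size supp)%N /\ supp_at (index i supp).+1 = j.
Proof.
move=> ij li lj zb.
have [ei iS] := supp_at_index li; have [ej jS] := supp_at_index lj.
set k := index i supp in ei iS *; set k' := index j supp in ej jS.
have kk' : (k < k')%N by rewrite -supp_at_ltE // ei ej.
have k1s : (k.+1 < size supp)%N by apply: leq_ltn_trans jS.
split => //; case: (ltngtP k.+1 k') => [k1k' | | -> //]; last by lia.
have : (i < supp_at k.+1 < j)%N by rewrite -{1}ei -ej !supp_at_ltE ?ltnSn.
by move/(implyP (forallP zb _))/eqP/eqP; rewrite (negbTE (supp_at_neq0 k1s)).
Qed.

Lemma gap_support (i j : 'I_n) : even_gap lam i j || odd_gap lam i j ->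
  [/\ (i < j)%N, lam i != Zero, lam j != Zero & zeros_between lam i j].
Proof.
case/orP => [/and4P[ij sgn zb _] | /and5P[ij li /eqP lij zb _]]; last by rewrite -lij.
by case/orP: sgn => /andP[/eqP li /eqP lj]; split; rewrite ?li ?lj.
Qed.

(* By [zero_poly_mul_sign], the parity condition in the definition of gaps
   accounts exactly for the sign of [zero_poly]. *)
Lemma gapE (i j : 'I_n) :
  (i < j)%N -> lam i != Zero -> lam j != Zero -> zeros_between lam i j ->
  (even_gap lam i j || odd_gap lam i j) = (rho i * rho j < 0).
Proof.
move=> ij li lj zb; have := zero_poly_mul_sign ij li lj zb.
rewrite /rho mulrACA /even_gap /odd_gap ij zb -signr_odd /=.
set X := zero_poly.[s i] * zero_poly.[s j].
case: (lam i) li; case: (lam j) lj => // _ _; case: (odd _); rewrite ?expr1 ?expr0 => /= hX.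
all: first [(symmetry; lra) | (symmetry; apply/negbTE; rewrite -leNgt; lra)].
Qed.

Lemma mem_changes k :
  (k \in changes) = (k.+1 < size supp)%N && (rho_at k * rho_at k.+1 < 0).
Proof. by rewrite mem_filter mem_iota andbC; case: (size supp). Qed.

Lemma mlamE : mlam lam = (#|[pred i | lam i == Zero]| + size changes)%N.
Proof.
rewrite /mlam addnC; congr (_ + _)%N.
set A := [pred p : 'I_n * 'I_n | even_gap lam p.1 p.2].
set B := [pred p : 'I_n * 'I_n | odd_gap lam p.1 p.2].
rewrite -cardUI (@eq_card0 _ [predI A & B]) ?addn0; last first.
  move=> [i j]; rewrite !inE /A /B /= /even_gap /odd_gap.
  by case: (lam i); case: (lam j); rewrite /= ?andbF.
have supp_uniq : uniq supp by rewrite filter_uniq ?enum_uniq.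
have uniq_pairs : uniq [seq (supp_at k, supp_at k.+1) | k <- changes].
  rewrite map_inj_in_uniq ?filter_uniq ?iota_uniq // => k k'.
  rewrite !mem_changes => /andP[/ltnW ks _] /andP[/ltnW k's _] [e _].
  by apply/eqP; rewrite -(nth_uniq i0 ks k's supp_uniq); apply/eqP.
rewrite -(size_map (fun k => (supp_at k, supp_at k.+1))) -(card_uniqP uniq_pairs).
apply: eq_card => -[i j]; rewrite !inE /A /B /=.
apply/idP/mapP => [gap | [k + [-> ->]]]; last first.
  by rewrite mem_changes => /andP[k1s chg]; rewrite gapE ?supp_at_ltE ?supp_at_neq0 ?zeros_between_supp_at // ltnW.
have [ij li lj zb] := gap_support gap.
have [k1s ek] := supp_at_consecutive ij li lj zb; have [ei _] := supp_at_index li.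
exists (index i supp); last by rewrite ei ek.
by rewrite mem_changes k1s /rho_at ei ek -gapE.
Qed.


Lemma zero_poly_neq0 : zero_poly != 0.
Proof. exact/monic_neq0/monic_prod_XsubC. Qed.

Lemma supp_pt_lt j k : (j < k)%N -> (k < size supp)%N -> supp_pt j < supp_pt k.
Proof. by move=> jk kL; rewrite lt_s supp_at_ltE // (ltn_trans jk). Qed.

Lemma rho_at_neq0 k : (k < size supp)%N -> rho_at k != 0.
Proof. by move=> kL; rewrite rho_neq0 ?supp_at_neq0. Qed.

(* Factoring out [zero_poly], the sign changes of [rho] along the support are
   those of the cofactor, whose size bounds them. *)
Lemma mlam_lt_size (p : {poly R}) :
  p != 0 -> (forall i, sign_of p.[s i] = lam i) -> (mlam lam < size p)%N.
Proof.
move=> p0 hp.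
have [q pE] : exists q, p = q * zero_poly.
  rewrite /zero_poly -(big_map s xpredT (fun x => 'X - x%:P)).
  apply: uniq_roots_prod_XsubC.
    by apply/allP => _ /mapP[z zz ->]; rewrite /root -sign_of_eq0 hp -mem_zeros.
  by rewrite uniq_rootsE map_inj_uniq; [exact: filter_uniq (enum_uniq _) | exact: s_inj].
have q0 : q != 0 by apply: contraNneq p0 => q0; rewrite pE q0 mul0r.
have rho_q k : (k < size supp)%N -> 0 < rho_at k * q.[supp_pt k].
  move=> kL; have /sign_of_gt0 : p.[supp_pt k] != 0 by rewrite -sign_of_eq0 hp supp_at_neq0.
  by rewrite hp pE hornerM /rho_at /rho; congr (0 < _); ring.
rewrite mlamE pE size_mul ?zero_poly_neq0 // size_zero_poly addnS /= addnC ltn_add2r.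
rewrite size_filter; case L: (size supp) => [|L'] /=; first by rewrite size_poly_gt0.
rewrite (@eq_in_count _ _ (fun k => q.[supp_pt k] * q.[supp_pt k.+1] < 0)).
  apply: sign_changes_lt_size => [k kL | k kL]; first by rewrite supp_pt_lt ?L.
  by apply: contraTneq (rho_q k _) => [->|]; rewrite ?mulr0 ?ltxx ?L.
move=> k; rewrite mem_iota => /andP[_ kL] /=.
by rewrite (mul_lt0_congr (rho_q k _) (rho_q k.+1 _)) ?L // ltnW.
Qed.

Lemma supp_pt_mid j k : k \in changes -> (j < size supp)%N ->
  if (j <= k)%N then supp_pt j < (supp_pt k + supp_pt k.+1) / 2
  else (supp_pt k + supp_pt k.+1) / 2 < supp_pt j.
Proof.
rewrite mem_changes => /andP[k1L _] jL.
have [lo hi] := midf_lt (supp_pt_lt (ltnSn k) k1L).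
case: ltngtP => [jk | kj | -> //]; first exact: lt_trans (supp_pt_lt jk (ltnW k1L)) lo.
by case: (ltngtP k.+1 j) kj => // [k1j | <-] _; first exact: lt_trans hi (supp_pt_lt k1j jL).
Qed.

Lemma change_poly_sign j : (j < size supp)%N ->
  0 < (-1) ^+ count (fun k => j <= k)%N changes * change_poly.[supp_pt j].
Proof.
move=> jL; rewrite horner_prod (eq_bigr (fun k => supp_pt j - (supp_pt k + supp_pt k.+1) / 2));
  last by move=> k _; rewrite hornerXsubC.
rewrite -(@eq_in_count _ (fun k => supp_pt j - (supp_pt k + supp_pt k.+1) / 2 < 0)) => [|k kc].
  apply: prod_sign_gt0; apply/allP => k kc; rewrite subr_eq0.
  by have := supp_pt_mid kc jL; case: leqP => _ h; rewrite ?(lt_eqF h) ?(gt_eqF h).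
by have := supp_pt_mid kc jL; rewrite subr_lt0; case: leqP => // _ /lt_gtF.
Qed.

(* [change_poly] changes sign between consecutive support points exactly
   where [rho] does. *)
Lemma rho_change_poly_step j : (j.+1 < size supp)%N ->
  0 < rho_at j * change_poly.[supp_pt j] * (rho_at j.+1 * change_poly.[supp_pt j.+1]).
Proof.
move=> j1L; have changes_uniq : uniq changes by rewrite filter_uniq ?iota_uniq.
set c := count (fun k => j.+1 <= k)%N changes; set e := nat_of_bool (j \in changes).
have c_split : count (fun k => j <= k)%N changes = (c + e)%N.
  rewrite /e -(count_uniq_mem _ changes_uniq) -count_predUI.
  rewrite (@eq_count _ (predI _ _) pred0) ?count_pred0 ?addn0 => [|k /=]; last first.
    by apply/negbTE/negP => /andP[jk /eqP kj]; rewrite kj ltnn in jk.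
  by apply: eq_count => k /=; rewrite leq_eqVlt orbC eq_sym.
have rho_sign : 0 < (-1) ^+ e * (rho_at j * rho_at j.+1).
  rewrite /e mem_changes j1L /=; case: (ltP (rho_at j * rho_at j.+1) 0) => rr /=; first by rewrite mulN1r oppr_gt0.
  by rewrite mul1r lt_def rr andbT mulf_neq0 // rho_at_neq0 // ltnW.
have := mulr_gt0 (mulr_gt0 (change_poly_sign (ltnW j1L)) (change_poly_sign j1L)) rho_sign.
rewrite c_split exprD; congr (0 < _); rewrite -[RHS](signrMK c) -[RHS](signrMK e).
by ring.
Qed.

Lemma rho_change_poly_sign j : (j < size supp)%N ->
  0 < rho_at 0 * change_poly.[supp_pt 0] * (rho_at j * change_poly.[supp_pt j]).
Proof.
move=> jL; pose b k := rho_at k * change_poly.[supp_pt k].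
have := @sign_changes_parity _ b j.
rewrite /sign_changes (eq_in_count (a2 := pred0)) ?count_pred0 ?mul1r => [|k]; last first.
  rewrite mem_iota => /andP[_ kj]; apply/negbTE; rewrite -leNgt ltW //.
  exact: rho_change_poly_step (leq_ltn_trans kj jL).
apply=> k kj; have kL := leq_ltn_trans kj jL; rewrite mulf_neq0 ?rho_at_neq0 //.
by have /lt0r_neq0 := change_poly_sign kL; rewrite mulf_eq0 signr_eq0.
Qed.

Lemma sign_vector_poly (d : nat) :
  (mlam lam < d)%N -> exists p : {poly R}, (size p <= d)%N /\ forall i, sign_of p.[s i] = lam i.
Proof.
rewrite mlamE => md; pose c := rho_at 0 * change_poly.[supp_pt 0].
exists (c *: (zero_poly * change_poly)); split.
  rewrite (leq_trans (size_scale_leq _ _)) // size_mul ?zero_poly_neq0 ?monic_neq0 //.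
    by rewrite size_zero_poly size_prod_XsubC addSn addnS.
  exact: monic_prod_XsubC.
move=> i; case: (eqVneq (lam i) Zero) => li.
  by rewrite hornerZ hornerM zero_poly_root // mul0r mulr0 /sign_of ltxx li.
have [ej jL] := supp_at_index li; apply: sign_of_num li _.
have -> : sign_num R (lam i) * (c *: (zero_poly * change_poly)).[s i] =
          c * (rho_at (index i supp) * change_poly.[supp_pt (index i supp)]).
  by rewrite hornerZ hornerM /rho_at /rho /supp_pt ej; ring.
exact: rho_change_poly_sign.
Qed.

End SupportSignChanges.

Lemma mlam_lt_poly_size (R : realFieldType) (n : nat) (s : 'I_n -> R)
    (lam : 'I_n -> sign) (p : {poly R}) :
  (forall i j : 'I_n, (i < j)%N -> s i < s j) -> p != 0 ->
  (forall i, sign_of p.[s i] = lam i) -> (mlam lam < size p)%N.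
Proof.
case: n s lam => [|n] s lam s_incr p0 hp; last exact: (mlam_lt_size s_incr ord0 p0 hp).
by rewrite /mlam !eq_card0 ?size_poly_gt0 // => [[]|[[]]|[[]]].
Qed.

Lemma exists_poly_signs (R : realFieldType) (n d : nat) (s : 'I_n -> R)
    (lam : 'I_n -> sign) :
  (forall i j : 'I_n, (i < j)%N -> s i < s j) -> (mlam lam < d)%N ->
  exists p : {poly R}, (size p <= d)%N /\ forall i, sign_of p.[s i] = lam i.
Proof.
case: n s lam => [|n] s lam s_incr; last exact: (sign_vector_poly s_incr ord0).
by move=> md; exists 1; split=> [|[]//]; rewrite size_poly1 (leq_ltn_trans _ md).
Qed.

Section Faces.
Variables (R : realFieldType) (n d : nat) (s : 'I_n -> R).
Implicit Types (w x y : 'rV[R]_d) (lam : 'I_n -> sign) (c : 'I_n -> R).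

Definition sign_face lam x : Prop :=
  exists c, [/\ forall i, 0 <= c i <= 1, forall i, lam i = Plus -> c i = 1,
                forall i, lam i = Minus -> c i = 0 & x = \sum_(i < n) c i *: ugen d s i].

Definition covector w (i : 'I_n) : sign := sign_of (dotv w (ugen d s i)).

Lemma dotv_ugen w i : dotv w (ugen d s i) = (rVpoly w).[s i].
Proof.
rewrite (horner_coef_wide _ (size_poly _ _)) /dotv; apply: eq_bigr => k _.
by rewrite coef_rVpoly_ord mxE.
Qed.

Lemma dotv_sum_ugen w c :
  dotv w (\sum_(i < n) c i *: ugen d s i) = \sum_(i < n) c i * dotv w (ugen d s i).
Proof.
rewrite /dotv; under eq_bigr do rewrite summxE mulr_sumr.
rewrite exchange_big /=; apply: eq_bigr => i _; rewrite mulr_sumr.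
by apply: eq_bigr => k _; rewrite !mxE mulrCA.
Qed.

Lemma box_argmax_coef (I : finType) (a c : I -> R) :
  (forall i, 0 <= c i <= 1) ->
  \sum_i (if 0 < a i then a i else 0) <= \sum_i c i * a i ->
  forall i, (0 < a i -> c i = 1) /\ (a i < 0 -> c i = 0).
Proof.
move=> c01 le_sum.
have ge0 i : 0 <= (if 0 < a i then a i else 0) - c i * a i.
  by rewrite subr_ge0; have := c01 i; case: ifP => [|/negbT]; rewrite -?leNgt => ai /andP[]; nra.
have sum0 : \sum_i ((if 0 < a i then a i else 0) - c i * a i) = 0.
  by apply/eqP; rewrite eq_le sumr_ge0 ?andbT ?sumrB ?subr_le0.
move=> i; have /(_ i isT)/eqP := psumr_eq0P (fun j _ => ge0 j) sum0.
rewrite subr_eq0 => /eqP e.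
split=> ai.
  by apply: (mulIf (lt0r_neq0 ai)); rewrite mul1r -e ai.
move: e; rewrite ltNge (ltW ai) /= => /esym/eqP.
by rewrite mulf_eq0 (negbTE (ltr0_neq0 ai)) orbF => /eqP.
Qed.

Lemma maximizer_coef w c :
  (forall i, 0 <= c i <= 1) ->
  (forall y, zonotope s y -> dotv w y <= dotv w (\sum_(i < n) c i *: ugen d s i)) ->
  forall i, (0 < dotv w (ugen d s i) -> c i = 1) /\ (dotv w (ugen d s i) < 0 -> c i = 0).
Proof.
move=> c01 cmax; apply: box_argmax_coef => //.
pose v i : R := if 0 < dotv w (ugen d s i) then 1 else 0.
have vZ : zonotope s (\sum_(i < n) v i *: ugen d s i).
  by exists v; split=> // i; rewrite /v; case: ifP; rewrite ?lexx ?ler01.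
have := cmax _ vZ; rewrite !dotv_sum_ugen; apply: le_trans.
rewrite (eq_bigr (fun i => v i * dotv w (ugen d s i))) => [|i _]; first exact: lexx.
by rewrite /v; case: ifP; rewrite ?mul1r ?mul0r.
Qed.

Lemma sign_faceE w lam : covector w =1 lam ->
  forall x, sign_face lam x <-> zonotope s x /\ (forall y, zonotope s y -> dotv w y <= dotv w x).
Proof.
move=> hw x; split=> [[c [c01 cP cM ->]] | [[c [c01 ->]] xmax]].
  split=> [|_ [c' [c'01 ->]]]; first by exists c.
  rewrite !dotv_sum_ugen; apply: ler_sum => i _; have := hw i; rewrite /covector.
  have := c'01 i; case: sign_ofP => [ai | ai | ->] /andP[c'0 c'1] li; last by rewrite !mulr0.
    by rewrite cP // mul1r; nra.
  by rewrite cM // mul0r; nra.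
have cw := maximizer_coef c01 xmax.
exists c; split=> // i li; have := hw i; rewrite li /covector; case: sign_ofP => // ai _.
  exact: (cw i).1.
exact: (cw i).2.
Qed.

Lemma sign_face_mono l1 l2 : lam_le l1 l2 -> forall x, sign_face l1 x -> sign_face l2 x.
Proof.
move=> le12 x [c [c01 cP cM ->]]; exists c; split=> // i li.
  by apply: cP; have := le12 i; rewrite /sign_le li; case: (l1 i).
by apply: cM; have := le12 i; rewrite /sign_le li; case: (l1 i).
Qed.

Definition mid_coef (a : sign) : R := match a with Plus => 1 | Minus => 0 | Zero => 2^-1 end.

Lemma sign_face_mid lam : sign_face lam (\sum_(i < n) mid_coef (lam i) *: ugen d s i).
Proof.
exists (fun i => mid_coef (lam i)); split=> // [i | i -> | i ->] //.
by case: (lam i); rewrite /= ?lexx ?ler01 //; apply/andP; split; lra.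
Qed.

(* The midpoint of the face of [l1] has coefficient [1/2] exactly at the zeros
   of [l1], so it pins down [l1] inside any face containing it. *)
Lemma sign_face_sub_le l1 l2 w : covector w =1 l2 ->
  (forall x, sign_face l1 x -> sign_face l2 x) -> lam_le l1 l2.
Proof.
move=> hw sub i; have [_ xmax] := (sign_faceE hw _).1 (sub _ (sign_face_mid l1)).
have mid01 j : 0 <= mid_coef (l1 j) <= 1.
  by case: (l1 j); rewrite /= ?lexx ?ler01 //; apply/andP; split; lra.
have [cP cM] := maximizer_coef mid01 xmax i.
rewrite /sign_le -(hw i) /covector; case: sign_ofP => [ai | ai | _]; last by rewrite orbT.
  by move: (cP ai); case: (l1 i) => //= h; lra.
by move: (cM ai); case: (l1 i) => //= h; lra.
Qed.

Lemma sign_face_zonotope lam x : sign_face lam x -> zonotope s x.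
Proof. by move=> [c [c01 _ _ ->]]; exists c. Qed.

Lemma sign_face0 lam x : (forall i, lam i = Zero) -> zonotope s x -> sign_face lam x.
Proof. by move=> l0 [c [c01 ->]]; exists c; split=> // i; rewrite l0. Qed.

End Faces.

Lemma card_ord_le_mlam (n : nat) (lam : 'I_n -> sign) :
  (forall i, lam i = Zero) -> (n <= mlam lam)%N.
Proof.
move=> l0; rewrite /mlam (@eq_cardT _ [pred i | lam i == Zero]) ?size_enum_ord ?leq_addl //.
by move=> i; rewrite !inE l0.
Qed.

Unset Implicit Arguments.

Theorem proposition3p2 (R : realFieldType) (n d : nat) (s : 'I_n -> R)
  (hs : forall i j : 'I_n, (i < j)%N -> s i < s j)
  (hdn : (d <= n)%N) :
  exists f : ('I_n -> sign) -> ('rV[R]_d -> Prop),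
    [/\ (forall l, (mlam l < d)%N -> proper_face (zonotope s) (f l)),
        (forall F, proper_face (zonotope s) F ->
           exists l, (mlam l < d)%N /\ (forall x, f l x <-> F x)) &
        (forall l1 l2, (mlam l1 < d)%N -> (mlam l2 < d)%N ->
           ((forall x, f l1 x -> f l2 x) <-> lam_le l1 l2))].
Proof.
have realize l : (mlam l < d)%N -> exists w : 'rV[R]_d, covector s w =1 l.
  move=> /(exists_poly_signs hs) [p [size_p hp]].
  by exists (poly_rV p) => i; rewrite /covector dotv_ugen poly_rV_K.
exists (sign_face s); split.
- move=> l ml; have [w hw] := realize l ml; split.
  + by exists w; apply: sign_faceE.
  + by eexists; apply: sign_face_mid.
  + move=> whole; suff : (n <= mlam l)%N by lia.
    apply: card_ord_le_mlam => i.
    have := sign_face_sub_le (l1 := fun _ => Zero) hw (fun x zx => whole x (sign_face_zonotope zx)) i.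
    by rewrite /sign_le eq_sym orbb => /eqP.
- move=> F [[w hF] _ not_full]; exists (covector s w); split.
    apply: (@leq_trans (size (rVpoly w))); last exact: size_poly.
    apply: (mlam_lt_poly_size (p := rVpoly w) hs) => [|i]; last first.
      by rewrite /covector dotv_ugen.
    apply/negP => /eqP w0; apply: not_full => x zx; apply/hF/(sign_faceE (frefl _)).
    by apply: sign_face0 zx => i; rewrite /covector dotv_ugen w0 horner0 /sign_of ltxx.
  by move=> x; apply: iff_trans (sign_faceE (frefl _) x) (iff_sym (hF x)).
- move=> l1 l2 _ /realize [w hw]; split; [exact: sign_face_sub_le hw | exact: sign_face_mono].
Qed.
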